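(* Let $u$ be a smooth solution of the equivariant Skyrme equation in $\Omega$ with $u(t,0)=0$, and let $(t_n)_n\subset(0,T_0]$ be a sequence with $t_n\to0$ and \[ \lim_{n\to\infty}\int_0^{t_n}\frac{\sin^2u(t_n,r)}{r^2}\,u_r(t_n,r)^2\,r\,dr=0. \] Then there are constants $C_n$ with $C_n\to0$ as $n\to\infty$ such that $|u(t_n,r)|\le C_n\,r^{1/2}$ for all $0\le r\le t_n$ (for all $n$ sufficiently large).
   Context: Fix $\alpha>0$, $T_0>0$. The equivariant Skyrme equation is \[ \Big(1+\tfrac{\alpha^2\sin^2u}{r^2}\Big)(u_{tt}-u_{rr}) - \Big(1-\tfrac{\alpha^2\sin^2u}{r^2}\Big)\tfrac{u_r}{r} + \tfrac{\sin 2u}{2r^2}\big[\alpha^2(u_t^2-u_r^2)+1\big]=0. \] $\Omega=\{(t,r):0<t\le T_0,\ 0\le r\le t\}$; a smooth solution in $\Omega$ is a smooth function on $\Omega$ satisfying the equation for $r>0$. *)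

From Stdlib Require Import Reals Lra.
Open Scope R_scope.

Definition openR2 (O : R -> R -> Prop) : Prop :=
  forall t r, O t r -> exists e, 0 < e /\
    forall t' r', Rabs (t' - t) < e -> Rabs (r' - r) < e -> O t' r'.

Definition cont2_on (O : R -> R -> Prop) (f : R -> R -> R) : Prop :=
  forall t r, O t r -> forall eps, 0 < eps -> exists d, 0 < d /\
    forall t' r', O t' r' -> Rabs (t' - t) < d -> Rabs (r' - r) < d ->
      Rabs (f t' r' - f t r) < eps.

Definition is_dt_on (S : R -> R -> Prop) (f g : R -> R -> R) : Prop :=
  forall t r, S t r -> derivable_pt_lim (fun s => f s r) t (g t r).

Definition is_dr_on (S : R -> R -> Prop) (f g : R -> R -> R) : Prop :=
  forall t r, S t r -> derivable_pt_lim (fun s => f t s) r (g t r).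

Fixpoint Ck_on (k : nat) (O : R -> R -> Prop) (f : R -> R -> R) : Prop :=
  match k with
  | O => cont2_on O f
  | S k' => cont2_on O f /\
      exists ft fr, is_dt_on O f ft /\ is_dr_on O f fr /\
                    Ck_on k' O ft /\ Ck_on k' O fr
  end.

Definition smooth_on (O : R -> R -> Prop) (f : R -> R -> R) : Prop :=
  forall k, Ck_on k O f.

Definition Omega (T0 t r : R) : Prop := 0 < t <= T0 /\ 0 <= r <= t.

(* u is smooth on Omega: u is C^infinity on some open set containing Omega
   (i.e. u is the restriction to Omega of a smooth function on a neighbourhood). *)
Definition smooth_in_Omega (T0 : R) (u : R -> R -> R) : Prop :=
  exists O, openR2 O /\ (forall t r, Omega T0 t r -> O t r) /\ smooth_on O u.

Definition skyrme_eq (alpha : R) (u ut ur utt urr : R -> R -> R) (t r : R) : Prop :=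
  (1 + alpha ^ 2 * sin (u t r) ^ 2 / r ^ 2) * (utt t r - urr t r)
  - (1 - alpha ^ 2 * sin (u t r) ^ 2 / r ^ 2) * (ur t r / r)
  + sin (2 * u t r) / (2 * r ^ 2) * (alpha ^ 2 * (ut t r ^ 2 - ur t r ^ 2) + 1) = 0.

Definition smooth_solution (alpha T0 : R) (u ut ur utt urr : R -> R -> R) : Prop :=
  smooth_in_Omega T0 u /\
  is_dt_on (Omega T0) u ut /\ is_dr_on (Omega T0) u ur /\
  is_dt_on (Omega T0) ut utt /\ is_dr_on (Omega T0) ur urr /\
  (forall t r, Omega T0 t r -> 0 < r -> skyrme_eq alpha u ut ur utt urr t r).

Definition angular_density (u ur : R -> R -> R) (t : R) : R -> R :=
  fun r => sin (u t r) ^ 2 / r ^ 2 * ur t r ^ 2 * r.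

(* Fix a time t and write v = u(t,.), v' = u_r(t,.) on [0,t], with v(0) = 0.
   Since d/dr (1 - cos v) = sin v * v', Young's inequality
     sin v * v' <= lam/2 * sin^2 v * v'^2 / r + r / (2 lam)
   integrated over [0,s] gives 1 - cos v(s) <= lam/2 * E + s^2/(4 lam), where
   E is the angular energy of the slice.  If E <= delta^2, the choice
   lam = s/delta yields 1 - cos v(s) <= s * delta.  When t * delta < 1/3, the
   oscillation 1 - cos v stays below 1/3, so by continuity and v(0) = 0 the
   values of v never leave [-1,1]; there 1 - cos x >= x^2/3, whence
   v(s)^2 <= 3 delta s.  For the sequence t_n, delta_n := sqrt|E_n| + t_n
   tends to 0, and C_n := sqrt (3 delta_n) is the required constant. *)

From Stdlib Require Import Reals Lra.
From Coquelicot Require Import Coquelicot.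
Open Scope R_scope.

(* Quadratic lower bound for 1 - cos near 0, from the Taylor upper bound
   cos x <= cos_ub x of the standard library. *)
Lemma one_minus_cos_ge_sqr (x : R) : Rabs x <= 1 -> x ^ 2 / 3 <= 1 - cos x.
Proof.
  intros Hx.
  assert (Hub : cos x <= cos_ub x).
  { assert (H := PI2_1). unfold Rabs in Hx; destruct (Rcase_abs x); apply COS; lra. }
  assert (Hexpand : cos_ub x = 1 - x^2/2 + x^4/24 - x^6/720 + x^8/40320).
  { unfold cos_ub, cos_approx, cos_term. cbn [sum_f_R0 Nat.mul Nat.add].
    repeat rewrite fact_simpl. repeat rewrite mult_INR. repeat rewrite S_INR.
    simpl INR. field. }
  assert (Hy : 0 <= x ^ 2 <= 1) by (split; [nra | unfold Rabs in Hx; destruct (Rcase_abs x); nra]).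
  replace (x ^ 4) with (x^2 * x^2) in Hexpand by ring.
  replace (x ^ 6) with (x^2 * x^2 * x^2) in Hexpand by ring.
  replace (x ^ 8) with (x^2 * x^2 * x^2 * x^2) in Hexpand by ring.
  set (y := x ^ 2) in *.
  assert (y * y <= y) by nra.
  assert (y * y * y <= y * y) by nra.
  assert (y * y * y * y <= y * y * y) by nra.
  nra.
Qed.

Lemma young_weighted (a q s lam : R) :
  0 < s -> 0 < lam -> q * s = a ^ 2 -> a <= lam / 2 * q + s / (2 * lam).
Proof.
  intros Hs Hl Hq.
  assert (H := pow2_ge_0 (lam * a - s)).
  apply Rmult_le_reg_r with (2 * lam * s); [nra |].
  replace ((lam / 2 * q + s / (2 * lam)) * (2 * lam * s))
    with (lam * lam * (q * s) + s * s) by (field; lra).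
  rewrite Hq. nra.
Qed.

(* The clamp of s to [0,t], used to extend a function continuous on [0,t]
   to a function continuous on R. *)
Definition clamp (t s : R) : R := Rmax 0 (Rmin s t).

Lemma clamp_in (t s : R) : 0 <= t -> 0 <= clamp t s <= t.
Proof. intros Ht. unfold clamp, Rmax, Rmin. repeat destruct Rle_dec; lra. Qed.

Lemma clamp_id (t s : R) : 0 <= s <= t -> clamp t s = s.
Proof. intros Hs. unfold clamp, Rmax, Rmin. repeat destruct Rle_dec; lra. Qed.

(* The clamp is 1-Lipschitz, hence continuous. *)
Lemma clamp_continuous (t : R) : 0 <= t -> continuity (clamp t).
Proof.
  intros Ht s eps Heps. exists eps. split; [exact Heps |].
  intros x [_ Hx]. simpl in *. unfold R_dist in *.
  eapply Rle_lt_trans; [| exact Hx].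
  unfold clamp, Rmax, Rmin.
  repeat destruct Rle_dec; unfold Rabs; repeat destruct Rcase_abs; lra.
Qed.

Definition radial_energy (v dv : R -> R) (r : R) : R :=
  sin (v r) ^ 2 / r ^ 2 * dv r ^ 2 * r.

Lemma radial_energy_nonneg (v dv : R -> R) (r : R) : 0 < r -> 0 <= radial_energy v dv r.
Proof.
  intros Hr. unfold radial_energy.
  assert (0 < r ^ 2) by (apply pow_lt; lra).
  apply Rmult_le_pos; [apply Rmult_le_pos |]; try lra.
  - apply Rdiv_le_0_compat; [apply pow2_ge_0 | lra].
  - apply pow2_ge_0.
Qed.

(* A profile v that is continuous on [0,t], vanishes at 0 and whose
   oscillation 1 - cos v stays below 1/3 takes its values in [-1,1]:
   otherwise, by the intermediate value theorem, |v| = 1 somewhere, where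
   1 - cos v >= 1/3. *)
Lemma abs_le_one_of_small_oscillation (v : R -> R) (t : R) :
  0 <= t -> (forall s, 0 <= s <= t -> continuity_pt v s) -> v 0 = 0 ->
  (forall s, 0 <= s <= t -> 1 - cos (v s) < 1 / 3) ->
  forall s, 0 <= s <= t -> Rabs (v s) <= 1.
Proof.
  intros Ht Hcont Hv0 Hosc s Hs.
  destruct (Rle_lt_dec (Rabs (v s)) 1) as [Hle | Hgt]; [exact Hle | exfalso].
  set (h := fun x => v (clamp t x) ^ 2 - 1).
  assert (Hh : continuity h).
  { intros x. unfold h.
    apply continuity_pt_minus; [| apply continuity_pt_const; intros a b; reflexivity].
    apply (continuity_pt_comp (fun x => v (clamp t x)) (fun y => y ^ 2));
      [| apply derivable_continuous_pt, derivable_pt_pow].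
    apply (continuity_pt_comp (clamp t) v); [apply clamp_continuous; exact Ht |].
    apply Hcont, clamp_in, Ht. }
  assert (Hsign : h 0 * h s <= 0).
  { unfold h. rewrite (clamp_id t 0), (clamp_id t s), Hv0 by lra.
    assert (1 < v s ^ 2) by (rewrite <- Rsqr_pow2, Rsqr_abs; unfold Rsqr; nra).
    nra. }
  destruct (IVT_cor h 0 s Hh (proj1 Hs) Hsign) as [z [_ Hz]].
  unfold h in Hz.
  assert (Hsq : v (clamp t z) ^ 2 = 1) by lra.
  assert (Habs : Rabs (v (clamp t z)) <= 1).
  { rewrite <- Rabs_R1. apply Rsqr_le_abs_0. unfold Rsqr. nra. }
  assert (H1 := one_minus_cos_ge_sqr _ Habs).
  assert (H2 := Hosc _ (clamp_in t z Ht)).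
  lra.
Qed.

Section RadialSlice.

Variables (v dv : R -> R) (t : R).
Hypothesis t_pos : 0 < t.
Hypothesis v_at_0 : v 0 = 0.
Hypothesis v_deriv : forall s, 0 <= s <= t -> is_derive v s (dv s).
Hypothesis dv_cont : forall s, 0 <= s <= t -> continuity_pt dv s.

Lemma slice_continuous (s : R) : 0 <= s <= t -> continuity_pt v s.
Proof.
  intros Hs. apply derivable_continuous_pt. exists (dv s).
  apply is_derive_Reals, v_deriv, Hs.
Qed.

Lemma one_minus_cos_integral (s : R) : 0 <= s <= t ->
  is_RInt (fun x => sin (v x) * dv x) 0 s (1 - cos (v s)).
Proof.
  intros Hs.
  assert (Hrange : forall x, Rmin 0 s <= x <= Rmax 0 s -> 0 <= x <= t)
    by (intros x; rewrite Rmin_left, Rmax_right; lra).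
  replace (1 - cos (v s)) with (minus (1 - cos (v s)) (1 - cos (v 0)))
    by (rewrite v_at_0, cos_0; change (1 - cos (v s) - (1 - 1) = 1 - cos (v s)); ring).
  apply (is_RInt_derive (fun x => 1 - cos (v x))).
  - intros x Hx. apply Hrange in Hx.
    assert (Hd := v_deriv x Hx).
    apply is_derive_Reals in Hd. apply is_derive_Reals.
    replace (sin (v x) * dv x) with (0 - - sin (v x) * dv x) by ring.
    apply (derivable_pt_lim_minus (fun _ => 1) (comp cos v));
      [apply derivable_pt_lim_const |].
    exact (derivable_pt_lim_comp v cos x _ _ Hd (derivable_pt_lim_cos (v x))).
  - intros x Hx. apply Hrange in Hx. apply continuity_pt_filterlim.
    apply continuity_pt_mult; [| apply dv_cont, Hx].
    apply (continuity_pt_comp v sin); [apply slice_continuous, Hx | apply continuity_sin].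
Qed.

(* Integrating Young's inequality: an energy bound delta^2 on [0,t] gives
   the linear growth bound 1 - cos v(s) <= s * delta. *)
Lemma one_minus_cos_le_linear (delta : R) : 0 < delta ->
  ex_RInt (radial_energy v dv) 0 t -> RInt (radial_energy v dv) 0 t <= delta ^ 2 ->
  forall s, 0 <= s <= t -> 1 - cos (v s) <= s * delta.
Proof.
  intros Hdelta Hex Henergy s Hs.
  destruct (Req_dec s 0) as [-> | Hs0]; [rewrite v_at_0, cos_0; lra |].
  set (lam := s / delta).
  assert (Hlam : 0 < lam) by (apply Rdiv_lt_0_compat; lra).
  assert (Hex_s : ex_RInt (radial_energy v dv) 0 s)
    by (apply (ex_RInt_Chasles_1 (V := R_CompleteNormedModule) _ _ _ t); [lra | exact Hex]).
  assert (Hex_st : ex_RInt (radial_energy v dv) s t)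
    by (apply (ex_RInt_Chasles_2 (V := R_CompleteNormedModule) _ 0); [lra | exact Hex]).
  assert (Hmono : RInt (radial_energy v dv) 0 s <= RInt (radial_energy v dv) 0 t).
  { rewrite <- (RInt_Chasles (V := R_CompleteNormedModule) _ 0 s t Hex_s Hex_st).
    assert (0 <= RInt (radial_energy v dv) s t); [| change (plus ?a ?b) with (a + b); lra].
    apply RInt_ge_0; [lra | exact Hex_st |].
    intros x Hx. apply radial_energy_nonneg. lra. }
  assert (Hlinear : is_RInt (fun x => x / (2 * lam)) 0 s (s ^ 2 / (4 * lam))).
  { replace (s ^ 2 / (4 * lam)) with (minus (s ^ 2 / (4 * lam)) (0 ^ 2 / (4 * lam)))
      by (change (s ^ 2 / (4 * lam) - 0 ^ 2 / (4 * lam) = s ^ 2 / (4 * lam)); field; lra).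
    apply (is_RInt_derive (fun x => x ^ 2 / (4 * lam))).
    - intros x _. auto_derive; [exact I | field; lra].
    - intros x _. apply continuity_pt_filterlim, continuity_pt_div;
        [apply continuity_pt_id | apply continuity_pt_const; intros a b; reflexivity | lra]. }
  assert (Hyoung := is_RInt_plus _ _ _ _ _ _
            (is_RInt_scal _ _ _ (lam / 2) _ (RInt_correct _ _ _ Hex_s)) Hlinear).
  assert (Hftc : 1 - cos (v s) <= lam / 2 * RInt (radial_energy v dv) 0 s + s ^ 2 / (4 * lam)).
  { apply (is_RInt_le _ _ 0 s _ _ ltac:(lra) (one_minus_cos_integral s Hs) Hyoung).
    intros x Hx. apply young_weighted; try lra.
    unfold radial_energy. field. lra. }
  assert (lam / 2 * RInt (radial_energy v dv) 0 s <= lam / 2 * delta ^ 2)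
    by (apply Rmult_le_compat_l; lra).
  assert (lam / 2 * delta ^ 2 = s * delta / 2) by (unfold lam; field; lra).
  assert (s ^ 2 / (4 * lam) = s * delta / 4) by (unfold lam; field; lra).
  assert (0 < s * delta) by nra.
  lra.
Qed.

Lemma slice_sqrt_decay (delta : R) : 0 < delta -> t * delta < 1 / 3 ->
  ex_RInt (radial_energy v dv) 0 t -> RInt (radial_energy v dv) 0 t <= delta ^ 2 ->
  forall s, 0 <= s <= t -> v s ^ 2 <= 3 * delta * s.
Proof.
  intros Hdelta Hsmall Hex Henergy.
  assert (Hgrowth := one_minus_cos_le_linear delta Hdelta Hex Henergy).
  assert (Hosc : forall s, 0 <= s <= t -> 1 - cos (v s) < 1 / 3).
  { intros s Hs. assert (s * delta <= t * delta) by (apply Rmult_le_compat_r; lra).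
    specialize (Hgrowth s Hs). lra. }
  intros s Hs.
  assert (Hone := abs_le_one_of_small_oscillation v t ltac:(lra)
                    slice_continuous v_at_0 Hosc s Hs).
  assert (H := one_minus_cos_ge_sqr _ Hone).
  specialize (Hgrowth s Hs). lra.
Qed.

End RadialSlice.

Lemma cont2_slice (O : R -> R -> Prop) (f : R -> R -> R) (t s : R) :
  openR2 O -> cont2_on O f -> O t s -> continuity_pt (f t) s.
Proof.
  intros HO Hf Hts eps Heps.
  destruct (HO t s Hts) as [e [He HOe]].
  destruct (Hf t s Hts eps Heps) as [d [Hd Hfd]].
  exists (Rmin d e). split; [apply Rmin_pos; lra |].
  intros x [_ Hx]. simpl in *. unfold R_dist in *.
  assert (Htt : Rabs (t - t) = 0) by (rewrite Rminus_eq_0; apply Rabs_R0).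
  assert (Rabs (x - s) < d) by (eapply Rlt_le_trans; [exact Hx | apply Rmin_l]).
  assert (Rabs (x - s) < e) by (eapply Rlt_le_trans; [exact Hx | apply Rmin_r]).
  apply Hfd; [apply HOe |..]; lra.
Qed.

(* A smooth solution provides C^1 slices: for each time t there is a
   continuous derivative fr of u(t,.) on [0,t]; it coincides with u_r
   inside, so the angular energy of the slice may be computed with it. *)
Lemma smooth_solution_slice (alpha T0 : R) (u ut ur utt urr : R -> R -> R) :
  smooth_solution alpha T0 u ut ur utt urr ->
  exists fr : R -> R -> R, forall t, 0 < t <= T0 ->
    (forall s, 0 <= s <= t -> is_derive (u t) s (fr t s)) /\
    (forall s, 0 <= s <= t -> continuity_pt (fr t) s) /\
    (forall s, 0 <= s <= t -> fr t s = ur t s).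
Proof.
  intros [[O [HO [HOmega Hsmooth]]] [_ [Hdr _]]].
  destruct (Hsmooth 1%nat) as [_ [ft [fr [_ [Hfr [_ Hfr_cont]]]]]].
  exists fr. intros t Ht.
  assert (Hin : forall s, 0 <= s <= t -> Omega T0 t s) by (intros; unfold Omega; lra).
  split; [| split].
  - intros s Hs. apply is_derive_Reals, Hfr, HOmega, Hin, Hs.
  - intros s Hs. apply (cont2_slice O); [exact HO | exact Hfr_cont | apply HOmega, Hin, Hs].
  - intros s Hs. apply (uniqueness_limite (u t) s);
      [apply Hfr, HOmega | apply Hdr]; apply Hin, Hs.
Qed.

Lemma energy_le_sqr (E t : R) : 0 <= t -> E <= (sqrt (Rabs E) + t) ^ 2.
Proof.
  intros Ht.
  assert (Hs := sqrt_sqrt (Rabs E) (Rabs_pos E)).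
  assert (0 <= sqrt (Rabs E)) by apply sqrt_pos.
  assert (E <= Rabs E) by apply RRle_abs.
  nra.
Qed.

Lemma decay_scale_cv (E tn : nat -> R) : Un_cv E 0 -> Un_cv tn 0 ->
  Un_cv (fun n => sqrt (Rabs (E n)) + tn n) 0.
Proof.
  intros HE Ht.
  replace 0 with (sqrt (Rabs 0) + 0) by (rewrite Rabs_R0, sqrt_0; ring).
  apply CV_plus; [| exact Ht].
  apply (continuity_seq (fun x => sqrt (Rabs x))); [| exact HE].
  apply (continuity_pt_comp Rabs sqrt);
    [apply Rcontinuity_abs | apply continuity_pt_sqrt, Rabs_pos].
Qed.

Lemma sqrt_triple_cv (delta : nat -> R) : Un_cv delta 0 -> Un_cv (fun n => sqrt (3 * delta n)) 0.
Proof.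
  intros Hd.
  replace 0 with (sqrt (3 * 0)) by (rewrite Rmult_0_r, sqrt_0; reflexivity).
  apply (continuity_seq (fun x => sqrt (3 * x))); [| exact Hd].
  apply (continuity_pt_comp (fun x => 3 * x) sqrt); [| apply continuity_pt_sqrt; lra].
  apply continuity_pt_scal, continuity_pt_id.
Qed.

Theorem mainTheorem6 (alpha T0 : R) (u ut ur utt urr : R -> R -> R)
  (tn : nat -> R) :
  0 < alpha -> 0 < T0 ->
  smooth_solution alpha T0 u ut ur utt urr ->
  (forall t, 0 < t <= T0 -> u t 0 = 0) ->
  (forall n, 0 < tn n <= T0) ->
  Un_cv tn 0 ->
  (exists pr : forall n, Riemann_integrable (angular_density u ur (tn n)) 0 (tn n),
      Un_cv (fun n => RiemannInt (pr n)) 0) ->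
  exists C : nat -> R, Un_cv C 0 /\
    exists N : nat, forall n, (N <= n)%nat ->
      forall r, 0 <= r <= tn n -> Rabs (u (tn n) r) <= C n * sqrt r.
Proof.
  intros _ HT0 Hsol Hu0 Htn Htn_cv [pr Henergy_cv].
  destruct (smooth_solution_slice _ _ _ _ _ _ _ Hsol) as [fr Hslice].
  set (delta := fun n => sqrt (Rabs (RiemannInt (pr n))) + tn n).
  assert (Hdelta_cv : Un_cv delta 0) by exact (decay_scale_cv _ _ Henergy_cv Htn_cv).
  exists (fun n => sqrt (3 * delta n)). split; [exact (sqrt_triple_cv _ Hdelta_cv) |].
  destruct (Hdelta_cv (1 / (3 * T0)) ltac:(apply Rdiv_lt_0_compat; lra)) as [N HN].
  exists N. intros n Hn r Hr.
  specialize (HN n Hn). unfold R_dist in HN. rewrite Rminus_0_r in HN.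
  destruct (Hslice (tn n) (Htn n)) as [Hder [Hcont Hfr_ur]].
  assert (Hdelta_pos : 0 < delta n) by (assert (H := sqrt_pos (Rabs (RiemannInt (pr n))));
                                          specialize (Htn n); unfold delta; lra).
  rewrite Rabs_right in HN by lra.
  assert (Hsame : forall x, Rmin 0 (tn n) < x < Rmax 0 (tn n) ->
            angular_density u ur (tn n) x = radial_energy (u (tn n)) (fr (tn n)) x).
  { intros x Hx. rewrite Rmin_left, Rmax_right in Hx by (specialize (Htn n); lra).
    unfold angular_density, radial_energy. rewrite Hfr_ur by lra. reflexivity. }
  assert (Hex := ex_RInt_ext _ _ _ _ Hsame (ex_RInt_Reals_1 _ _ _ (pr n))).
  assert (Hbound : RInt (radial_energy (u (tn n)) (fr (tn n))) 0 (tn n) <= delta n ^ 2).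
  { rewrite <- (RInt_ext _ _ _ _ Hsame), (RInt_Reals _ _ _ (pr n)).
    apply energy_le_sqr. specialize (Htn n). lra. }
  assert (Hsmall : tn n * delta n < 1 / 3).
  { specialize (Htn n). apply Rle_lt_trans with (T0 * delta n); [apply Rmult_le_compat_r; lra |].
    replace (1 / 3) with (T0 * (1 / (3 * T0))) by (field; lra).
    apply Rmult_lt_compat_l; lra. }
  assert (Hsq := slice_sqrt_decay (u (tn n)) (fr (tn n)) (tn n) (proj1 (Htn n))
                   (Hu0 _ (Htn n)) Hder Hcont (delta n) Hdelta_pos Hsmall Hex Hbound r Hr).
  rewrite <- sqrt_mult, <- sqrt_Rsqr_abs by lra.
  apply sqrt_le_1_alt. rewrite Rsqr_pow2. exact Hsq.
Qed.
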